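(* Let $\mathbb{F}$ be a finite field with $n=|\mathbb{F}|$, let $d<n$ and $\delta=1-d/n\ge 3/4$, and let $0<\rho\le\delta/8$. Let $f\colon\mathbb{F}^m\to\mathbb{F}$ and let $a,h,h'\in\mathbb{F}^m$ be such that the function $g\colon\mathbb{F}^2\to\mathbb{F}$, $g(t,s)=f(a+th+sh')$, has at least $(\delta-2\rho)n^2$ nonzero values. Choose $s,s',t,t'\in\mathbb{F}$ independently and uniformly and let $y=a+sh+s'h'$ and $u=th+t'h'$. Then \[ \Pr\big[\,|\{r\in\mathbb{F}: f(y+ru)\ne0\}|\ge 2\rho n\,\big]\ge 1-\frac{4}{n}. \] *)

From HB Require Import structures.
From mathcomp Require Export all_boot all_order all_algebra.
Set Implicit Arguments. Unset Strict Implicit. Unset Printing Implicit Defensive.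
Import Order.TTheory GRing.Theory Num.Theory.
Local Open Scope ring_scope.

Definition line_nonzeros (F : finFieldType) (m : nat) (f : 'rV[F]_m -> F)
  (y u : 'rV[F]_m) : nat := #|[set r : F | f (y + r *: u) != 0]|.

Definition plane_nonzeros (F : finFieldType) (m : nat) (f : 'rV[F]_m -> F)
  (a h h' : 'rV[F]_m) : nat :=
  #|[set ts : F * F | f (a + ts.1 *: h + ts.2 *: h') != 0]|.

Definition good_lines (R : realFieldType) (F : finFieldType) (m : nat)
  (f : 'rV[F]_m -> F) (a h h' : 'rV[F]_m) (rho : R) : {set F * F * F * F} :=
  [set x : F * F * F * F |
    let: (s, s', t, t') := x in
    2 * rho * (#|F|)%:R <=
      (line_nonzeros f (a + s *: h + s' *: h') (t *: h + t' *: h'))%:R].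

From mathcomp Require Import all_boot all_order all_algebra.
From mathcomp Require Import ring lra.
Import Order.TTheory GRing.Theory Num.Theory.
Set Implicit Arguments. Unset Strict Implicit. Unset Printing Implicit Defensive.
Local Open Scope ring_scope.

(* Proof strategy: a second-moment (Chebyshev) argument on random lines of the
   plane P = {a + t h + s h'}.  Identify P with F^2 and let S be the set of
   parameters (t,s) where f is nonzero, K = |S|, N = |F|.  A quadruple
   x = (s,s',t,t') describes the line r |-> (s + r t, s' + r t') of F^2, and
   X(x) counts its parameters r landing in S.
   1. Uniformity: for fixed r the point of parameter r of a random line is
      uniform in F^2, and for r1 <> r2 the points of parameters r1, r2 are
      independent uniform points (the relevant maps F^4 -> F^4 are bijections).
   2. Hence E[X] = K/N and E[X^2] is explicit, giving the variance identity
      sum_x (K - N X(x))^2 = N^3 K (N^2 - K) <= N^7 / 4.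
   3. A line with fewer than 2 rho N nonzeros has K - N X >= 3/8 N^2 (this is
      where delta >= 3/4 and rho <= delta/8 enter), so by Chebyshev there are
      at most 16/9 N^3 <= 4 N^3 bad quadruples among the N^4. *)

Lemma chebyshev_count (R : realDomainType) (T : finType) (g : T -> R)
    (B : {set T}) (c : R) :
  0 <= c -> (forall x, x \in B -> c <= g x) ->
  #|B|%:R * c ^+ 2 <= \sum_x g x ^+ 2.
Proof.
move=> c_ge0 gB; rewrite mulr_natl -sumr_const.
apply: (le_trans (y := \sum_(x in B) g x ^+ 2)).
  by apply: ler_sum => x xB; rewrite lerXn2r ?nnegrE ?gB // (le_trans c_ge0) ?gB.
by rewrite [leRHS](bigID (mem B)) /= lerDl sumr_ge0 // => x _; rewrite sqr_ge0.
Qed.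

Lemma sum_indicator (R : comPzRingType) (T : finType) (A : {set T}) :
  \sum_x ((x \in A)%:R : R) = #|A|%:R.
Proof.
rewrite -sum1_card natr_sum [RHS]big_mkcond; apply: eq_bigr => x _.
by case: (x \in A).
Qed.

Lemma sum_quad_split (R : comPzRingType) (A B C D : finType)
    (phi : A * B -> R) (psi : C * D -> R) :
  \sum_(x : A * B * C * D) phi (x.1.1.1, x.1.1.2) * psi (x.1.2, x.2) =
  (\sum_p phi p) * (\sum_q psi q).
Proof.
pose join (y : (A * B) * (C * D)) : A * B * C * D := (y.1.1, y.1.2, y.2.1, y.2.2).
have join_bij : bijective join.
  by exists (fun x => ((x.1.1.1, x.1.1.2), (x.1.2, x.2))) => [[[] ? ? []]|[[[]]]].
rewrite (reindex join) /=; last by apply: onW_bij.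
rewrite mulr_suml; under [RHS]eq_bigr do rewrite mulr_sumr.
by rewrite pair_big; apply: eq_bigr => -[[? ?] [? ?]].
Qed.

Lemma affine_eval_inj (F : fieldType) (r1 r2 s t s2 t2 : F) : r1 != r2 ->
  s + r1 * t = s2 + r1 * t2 -> s + r2 * t = s2 + r2 * t2 -> s = s2 /\ t = t2.
Proof.
move=> r12 e1 e2.
have et : t = t2.
  have : (r1 - r2) * t = (r1 - r2) * t2.
    transitivity ((s + r1 * t) - (s + r2 * t)); first by ring.
    by rewrite e1 e2; ring.
  by apply: mulfI; rewrite subr_eq0.
by split=> //; move: e1; rewrite et => /addIr.
Qed.

Section RandomLines.

Variable F : finFieldType.

Definition line_point (x : F * F * F * F) (r : F) : F * F :=
  (x.1.1.1 + r * x.1.2, x.1.1.2 + r * x.2).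

Lemma sum_line_point (R : comPzRingType) (phi : F * F -> R) (r : F) :
  \sum_x phi (line_point x r) = (\sum_p phi p) * #|F|%:R ^+ 2.
Proof.
pose shear (x : F * F * F * F) :=
  ((line_point x r).1, (line_point x r).2, x.1.2, x.2).
have shear_inj : injective shear.
  move=> [[[s s'] t] t'] [[[s2 s2'] t2] t2'] /= [e1 e2 et et'].
  by move: e1 e2; rewrite et et' => /addIr-> /addIr->.
transitivity (\sum_x phi ((shear x).1.1.1, (shear x).1.1.2) * 1).
  by apply: eq_bigr => x _; rewrite mulr1.
transitivity (\sum_(x : F * F * F * F) phi (x.1.1.1, x.1.1.2) * 1).
  by rewrite [RHS](reindex_inj shear_inj).
by rewrite (sum_quad_split phi (fun=> 1)) sumr_const card_prod natrM expr2.
Qed.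

Lemma sum_line_point_pair (R : comPzRingType) (phi psi : F * F -> R)
    (r1 r2 : F) : r1 != r2 ->
  \sum_x phi (line_point x r1) * psi (line_point x r2) =
  (\sum_p phi p) * (\sum_q psi q).
Proof.
move=> r12.
pose eval2 (x : F * F * F * F) :=
  ((line_point x r1).1, (line_point x r1).2,
   (line_point x r2).1, (line_point x r2).2).
have eval2_inj : injective eval2.
  move=> [[[s s'] t] t'] [[[s2 s2'] t2] t2'] [e1 e1' e2 e2'].
  have [-> ->] := affine_eval_inj r12 e1 e2.
  by have [-> ->] := affine_eval_inj r12 e1' e2'.
transitivity (\sum_x phi ((eval2 x).1.1.1, (eval2 x).1.1.2) *
                     psi ((eval2 x).1.2, (eval2 x).2)) => //.
by rewrite -sum_quad_split [RHS](reindex_inj eval2_inj).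
Qed.

Variables (R : comPzRingType) (S : {set F * F}).

Definition line_count (x : F * F * F * F) : R :=
  \sum_r (line_point x r \in S)%:R.

Let N : R := #|F|%:R.
Let K : R := #|S|%:R.

Lemma line_count_sum : \sum_x line_count x = N ^+ 3 * K.
Proof.
rewrite /line_count exchange_big /=.
under eq_bigr do rewrite (sum_line_point (fun p => (p \in S)%:R)) sum_indicator.
by rewrite sumr_const -mulr_natl exprSr /N /K; ring.
Qed.

(* Second moment, split into the diagonal r1 = r2 and the N - 1 off-diagonal
   parameters, for which the two points are independent. *)
Lemma line_count_sqr_sum :
  \sum_x line_count x ^+ 2 = N * (N ^+ 2 * K + (N - 1) * K ^+ 2).
Proof.
have square x : line_count x ^+ 2 =
    \sum_r1 \sum_r2 ((line_point x r1 \in S)%:R * (line_point x r2 \in S)%:R).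
  by rewrite expr2 mulr_suml; apply: eq_bigr => r1 _; rewrite mulr_sumr.
have row r1 : \sum_x \sum_r2
    ((line_point x r1 \in S)%:R * (line_point x r2 \in S)%:R) =
    N ^+ 2 * K + (N - 1) * K ^+ 2.
  rewrite exchange_big /= (bigD1 r1) //=.
  have diag : \sum_x (((line_point x r1 \in S)%:R : R) *
                      (line_point x r1 \in S)%:R) = N ^+ 2 * K.
    rewrite mulrC /K -sum_indicator -(sum_line_point (fun p => (p \in S)%:R) r1).
    by apply: eq_bigr => x _; case: (_ \in _); rewrite ?mulr1 ?mulr0.
  under [X in _ + X]eq_bigr => r2 r2r1.
    rewrite (sum_line_point_pair (fun p => (p \in S)%:R) (fun p => (p \in S)%:R))
      1?eq_sym // sum_indicator.
  over.
  rewrite diag (sumr_const (predC1 r1)) cardC1 -[_ *+ _.-1]mulr_natl.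
  have -> : (#|F|.-1)%:R = N - 1 :> R.
    by rewrite -subn1 natrB // lt0n; apply/eqP/fintype0.
  by rewrite /K; ring.
under eq_bigr do rewrite square.
by rewrite exchange_big /= (eq_bigr _ (fun r1 _ => row r1)) sumr_const -mulr_natl.
Qed.

Lemma line_count_variance :
  \sum_x (K - N * line_count x) ^+ 2 = N ^+ 3 * K * (N ^+ 2 - K).
Proof.
have expand x : (K - N * line_count x) ^+ 2 =
    N ^+ 2 * line_count x ^+ 2 + ((- (2 * N * K)) * line_count x + K ^+ 2).
  by ring.
under eq_bigr do rewrite expand.
rewrite !big_split /= -!mulr_sumr sumr_const !card_prod.
rewrite line_count_sum line_count_sqr_sum -[K *+ _]mulr_natl !natrM -/N; ring.
Qed.

End RandomLines.

(* Second-moment bound: at most N^7 / (4 c^2) lines deviate from the mean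
   count by c (in the normalisation K - N X); the variance N^3 K (N^2 - K) is
   at most N^7 / 4 since K (N^2 - K) <= N^4 / 4. *)
Lemma few_deviating_lines (R : realFieldType) (F : finFieldType)
    (S : {set F * F}) (B : {set F * F * F * F}) (c : R) :
  0 <= c ->
  (forall x, x \in B -> c <= #|S|%:R - #|F|%:R * line_count R S x) ->
  #|B|%:R * c ^+ 2 <= #|F|%:R ^+ 7 / 4.
Proof.
move=> c_ge0 deviates.
apply: le_trans (chebyshev_count c_ge0 deviates) _.
rewrite line_count_variance.
set N : R := #|F|%:R; set K : R := #|S|%:R.
have N3_ge0 : 0 <= N ^+ 3 by rewrite exprn_ge0 ?ler0n.
have amgm : K * (N ^+ 2 - K) <= N ^+ 4 / 4.
  have := sqr_ge0 (N ^+ 2 - 2 * K).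
  have -> : N ^+ 4 = N ^+ 2 * N ^+ 2 by rewrite -exprD.
  nra.
have -> : N ^+ 7 / 4 = N ^+ 3 * (N ^+ 4 / 4) by rewrite mulrA -exprD.
by rewrite -mulrA ler_wpM2l.
Qed.

(* Elementary estimate: on a line with fewer than 2 rho N nonzeros inside a
   plane with at least (delta - 2 rho) N^2 nonzeros, the deviation K - N X
   is at least (delta - 4 rho) N^2 >= 3/8 N^2. *)
Lemma sparse_line_deviation (R : realFieldType) (N K X delta rho : R) :
  0 < N -> 3 / 4 <= delta -> 0 < rho -> rho <= delta / 8 ->
  (delta - 2 * rho) * N ^+ 2 <= K -> X < 2 * rho * N ->
  3 / 8 * N ^+ 2 <= K - N * X.
Proof.
move=> N_gt0 delta_ge rho_gt0 rho_le dense sparse.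
have NX_le : N * X <= N * (2 * rho * N) by rewrite ler_pM2l // ltW.
have N2_ge0 : 0 <= N ^+ 2 by rewrite sqr_ge0.
nra.
Qed.

Definition plane_support (F : finFieldType) (m : nat) (f : 'rV[F]_m -> F)
  (a h h' : 'rV[F]_m) : {set F * F} :=
  [set ts : F * F | f (a + ts.1 *: h + ts.2 *: h') != 0].

Lemma line_nonzeros_in_plane (R : comPzRingType) (F : finFieldType) (m : nat)
    (f : 'rV[F]_m -> F) (a h h' : 'rV[F]_m) (s s' t t' : F) :
  (line_nonzeros f (a + s *: h + s' *: h') (t *: h + t' *: h'))%:R =
  line_count R (plane_support f a h h') (s, s', t, t').
Proof.
rewrite /line_nonzeros -sum_indicator /line_count; apply: eq_bigr => r _.
by rewrite !inE /= scalerDr !scalerA !scalerDl !addrA (addrAC _ (s' *: h')).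
Qed.

Theorem mainTheorem5 (R : realFieldType) (F : finFieldType) (m d : nat)
  (delta rho : R) (f : 'rV[F]_m -> F) (a h h' : 'rV[F]_m) :
  (d < #|F|)%N ->
  delta = 1 - d%:R / (#|F|)%:R ->
  3 / 4 <= delta ->
  0 < rho -> rho <= delta / 8 ->
  (delta - 2 * rho) * (#|F|)%:R ^+ 2 <= (plane_nonzeros f a h h')%:R :> R ->
  1 - 4 / (#|F|)%:R <= (#|good_lines f a h h' rho|)%:R / (#|F|)%:R ^+ 4 :> R.
Proof.
move=> d_lt _ delta_ge rho_gt0 rho_le dense.
set S := plane_support f a h h'; set G := good_lines f a h h' rho.
set N : R := #|F|%:R.
have N_gt0 : 0 < N by rewrite ltr0n (leq_ltn_trans _ d_lt).
have bad_deviate x : x \in ~: G -> 3 / 8 * N ^+ 2 <= #|S|%:R - N * line_count R S x.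
  case: x => [[[s s'] t] t']; rewrite !inE -ltNge line_nonzeros_in_plane => sparse.
  exact: sparse_line_deviation delta_ge rho_gt0 rho_le dense sparse.
have gap_ge0 : 0 <= 3 / 8 * N ^+ 2 by apply: mulr_ge0; [lra | exact: sqr_ge0].
have bad_bound := few_deviating_lines gap_ge0 bad_deviate; rewrite -/N in bad_bound.
have bad_le : #|~: G|%:R <= 4 * N ^+ 3.
  rewrite leNgt; apply/negP => too_many.
  have : 0 < (#|~: G|%:R - 4 * N ^+ 3) * N ^+ 4.
    by rewrite mulr_gt0 ?subr_gt0 ?exprn_gt0.
  have : 0 <= N ^+ 7 by rewrite exprn_ge0 ?ltW.
  nra.
have card_split : #|G|%:R + #|~: G|%:R = N ^+ 4.
  by rewrite -natrD cardsC !card_prod !natrM /N; ring.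
rewrite ler_pdivlMr ?exprn_gt0 // mulrBl mul1r.
have -> : 4 / N * N ^+ 4 = 4 * N ^+ 3 by rewrite exprS mulrA divfK ?gt_eqF.
by rewrite -card_split -addrA gerDl subr_le0.
Qed.
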